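(* There are absolute constants $c_1>0$ and $c_2>0$ such that the following holds. Let $p$ be a prime and let $A\subset \mathbb F_p$ with $|A|=\delta p$, where $\delta >c_1 p^{-\frac 1{15}}$. Then there exist $x\in A$ and $y\in \mathbb F_p^*$ such that $x,\ x+y,\ x+y^2 \in A$; in fact the number of such triplets $(x, x+y, x+y^2)$ (i.e. of pairs $(x,y)\in\mathbb F_p\times\mathbb F_p^*$ with $x,x+y,x+y^2\in A$) is at least $c_2\,\delta^3p^2$.
   Context: $\mathbb F_p$ is the field with $p$ elements and $\mathbb F_p^*=\mathbb F_p\setminus\{0\}$. *)

From mathcomp Require Import all_boot all_order all_algebra.
From Stdlib Require Import Reals.
Set Implicit Arguments. Unset Strict Implicit. Unset Printing Implicit Defensive.
Import GRing.Theory.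
Local Open Scope ring_scope.

Definition triplet_pairs (p : nat) (A : {set 'F_p}) : {set 'F_p * 'F_p} :=
  [set xy : 'F_p * 'F_p | [&& xy.2 != 0, xy.1 \in A, (xy.1 + xy.2) \in A
                            & (xy.1 + xy.2 ^+ 2) \in A]].

Definition num_triplets (p : nat) (A : {set 'F_p}) : nat := #|triplet_pairs A|.

From mathcomp Require Import all_boot all_order all_algebra all_field.
From Stdlib Require Import Reals Lra.
From mathcomp Require Import zify ring.
(* [Reals] rebinds [^] on [nat] to [Nat.pow]; this restores [expn]. *)
Import ssrnat.
Import GRing.Theory Order.TTheory Num.Theory.
Delimit Scope ring_scope with mcR.

Set Implicit Arguments.
Unset Strict Implicit.
Unset Printing Implicit Defensive.

(* Write 1_A = |A|/p + g, with g the balanced function of A.  Counting the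
   pairs (x, y), y = 0 included, gives |A|^3/p + L with
   L = sum_x 1_A(x) sum_y 1_A(x + y) g(x + y^2).  Two Cauchy-Schwarz steps give
   L^4 <= |A|^4 S, where S is the l^2 norm of the correlations
   K_h(u) = sum_y g(u - y + y^2) g(u - y + (y + h)^2).  By Parseval, S is an
   average of |K_h^(s)|^2.  For s <> 0, completing the square writes K_h^(s) as
   a Gauss sum times sum_t g^(t) g^(s - t) e(phi_t(h)), where any two phases
   differ by a nondegenerate quadratic in h.  Bounding the quadratic
   exponential sums by sqrt p gives S <= 3 sqrt p p |A|^2, so
   L^8 <= 9 p^3 |A|^12.  Once |A| >= 4 p^(14/15) this forces |L| <= |A|^3/(4p),
   leaving at least |A|^3/(2p) pairs with y <> 0. *)

Lemma INR_expn (m n : nat) : INR (m ^ n) = (INR m ^ n)%R.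
Proof. by elim: n => [|n IHn]; rewrite ?expnS ?mult_INR ?IHn. Qed.

Lemma Rpower_density_expn_le (p a c : nat) : (0 < p)%N ->
  (INR c * Rpower (INR p) (- (1 / 15)) <= INR a / INR p)%R ->
  (c ^ 15 * p ^ 14 <= a ^ 15)%N.
Proof.
move=> p_gt0 dense.
have INRp_gt0 : (0 < INR p)%R by apply: lt_0_INR; apply/ssrnat.ltP.
set r := Rpower (INR p) (- (1 / 15)) in dense.
set d := (INR a / INR p)%R in dense.
have r15 : (r ^ 15 * INR p = 1)%R.
  rewrite -Rpower_pow; last exact: exp_pos.
  rewrite Rpower_mult -{2}(Rpower_1 _ INRp_gt0) -Rpower_plus.
  by rewrite (_ : (_ + 1 = 0)%R) ?Rpower_O //=; lra.
have dp : (d * INR p = INR a)%R by rewrite /d /Rdiv Rmult_assoc Rinv_l ?Rmult_1_r //; lra.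
have cr_ge0 : (0 <= INR c * r)%R by apply: Rmult_le_pos; [apply: pos_INR | apply/Rlt_le/exp_pos].
have pow15 := pow_incr _ _ 15 (conj cr_ge0 dense).
apply/ssrnat.leP; apply: INR_le; rewrite mult_INR !INR_expn -dp.
have -> : (INR c ^ 15 * INR p ^ 14 = (INR c * r) ^ 15 * INR p ^ 15)%R.
  by rewrite -[LHS]Rmult_1_r -r15 Rpow_mult_distr; lra.
rewrite [X in (_ <= X)%R]Rpow_mult_distr; apply: Rmult_le_compat_r => //.
exact: pow_le (Rlt_le _ _ INRp_gt0).
Qed.

Lemma INR_density_cube_le (p a T : nat) : (0 < p)%N -> (a ^ 3 <= 2 * p * T)%N ->
  (INR T >= 1 / 2 * (INR a / INR p) ^ 3 * INR p ^ 2)%R.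
Proof.
move=> p_gt0 /ssrnat.leP/le_INR; rewrite INR_expn !mult_INR.
have INRp_gt0 : (0 < INR p)%R by apply: lt_0_INR; apply/ssrnat.ltP.
set d := (INR a / INR p)%R.
have <- : (d * INR p = INR a)%R by rewrite /d /Rdiv Rmult_assoc Rinv_l ?Rmult_1_r //; lra.
rewrite [INR 2]/= => cube_le; apply: Rle_ge; apply: (Rmult_le_reg_l (INR p)) => //.
lra.
Qed.

Lemma density_expn_weaken (c a p m n : nat) : 0 < p -> a <= p ->
  c * p ^ (m + n) <= a ^ (m + n).+1 -> c * p ^ m <= a ^ m.+1.
Proof.
move=> p_gt0 a_le_p dense.
rewrite -(@leq_pmul2r (p ^ n)) ?expn_gt0 ?p_gt0 // -mulnA -expnD.
have an_le : a ^ n <= p ^ n by elim: (n) => // k IHk; rewrite !expnS leq_mul.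
by apply: (leq_trans dense); rewrite -addSn expnD leq_mul2l an_le orbT.
Qed.

Lemma cube_le_of_discrepancy (p a T : nat) : 0 < p -> a <= p ->
  4 ^ 15 * p ^ 14 <= a ^ 15 -> (a ^ 3 - p * (T + a)) ^ 8 <= 9 * p ^ 11 * a ^ 12 ->
  a ^ 3 <= 2 * p * T.
Proof.
move=> p_gt0 a_le_p a15 discr.
have a12 : 4 ^ 15 * p ^ 11 <= a ^ 12 by apply: (@density_expn_weaken _ _ _ 11 3).
have a2 : 4 ^ 15 * p ^ 1 <= a ^ 2 by apply: (@density_expn_weaken _ _ _ 1 13).
have a_gt0 : 0 < a.
  rewrite lt0n; apply: contraTneq a2 => ->.
  by rewrite -ltnNge muln_gt0 !expn_gt0 p_gt0.
(* Otherwise a^24 < 4^8 * 9 p^11 a^12, against a^12 >= 4^15 p^11. *)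
have small_error : 3 * a ^ 3 <= 4 * (p * (T + a)).
  rewrite leqNgt; apply/negP => big_error.
  have cube_lt : a ^ 3 < 4 * (a ^ 3 - p * (T + a)) by move: big_error; clear; lia.
  have : (a ^ 3) ^ 8 < 4 ^ 8 * (9 * p ^ 11 * a ^ 12).
    by apply: (leq_trans _ (leq_mul (leqnn _) discr)); rewrite -expnMn ltn_exp2r.
  have [a12_gt0 p11_gt0] : 0 < a ^ 12 /\ 0 < p ^ 11 by rewrite !expn_gt0 a_gt0 p_gt0.
  rewrite -expnM -[3 * 8]/(12 + 12) expnD (mulnA (4 ^ 8)) (ltn_pmul2r a12_gt0).
  move=> /(leq_ltn_trans a12); rewrite (mulnA (4 ^ 8)) (ltn_pmul2r p11_gt0).
  by rewrite -[15]/(8 + 7) expnD ltn_pmul2l ?expn_gt0.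
have four_p : 4 * p <= a ^ 2.
  by apply: leq_trans a2; rewrite expn1 leq_mul2r -{1}(expn1 4) leq_pexp2l ?orbT.
have : 4 * p * a <= a ^ 3 by rewrite expnS mulnC leq_mul2l four_p orbT.
move: small_error; clear; lia.
Qed.

Local Open Scope ring_scope.

Lemma sum_mul_sum (R : pzSemiRingType) (I J : finType) (f : I -> R) (g : J -> R) :
  (\sum_i f i) * (\sum_j g j) = \sum_i \sum_j f i * g j.
Proof. by rewrite mulr_suml; apply: eq_bigr => i _; rewrite mulr_sumr. Qed.

Lemma sum3_factor (R : pzSemiRingType) (I J K : finType)
    (X : I -> R) (Y : J -> I -> R) (Z : K -> I -> R) :
  \sum_k \sum_j \sum_i X i * Y j i * Z k i = \sum_i X i * (\sum_j Y j i) * (\sum_k Z k i).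
Proof.
rewrite exchange_big; under eq_bigr do rewrite exchange_big.
rewrite exchange_big; apply: eq_bigr => i _ /=.
rewrite -mulrA sum_mul_sum mulr_sumr; apply: eq_bigr => j _.
by rewrite mulr_sumr; apply: eq_bigr => k _; rewrite mulrA.
Qed.

Lemma le_of_eq (d : Order.disp_t) (T : porderType d) (x y : T) : x = y -> (x <= y)%O.
Proof. by move->. Qed.

Lemma ler_wXn2r (R : numDomainType) n (x y : R) : 0 <= x -> x <= y -> x ^+ n <= y ^+ n.
Proof. by move=> x_ge0 le_xy; rewrite lerXn2r ?nnegrE // (le_trans x_ge0 le_xy). Qed.

Section CauchySchwarz.
Variables (R : numDomainType) (I : finType).

Lemma cauchy_schwarz_ge0 (x y : I -> R) :
    (forall i, 0 <= x i) -> (forall i, 0 <= y i) ->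
  (\sum_i x i * y i) ^+ 2 <= (\sum_i x i ^+ 2) * (\sum_i y i ^+ 2).
Proof.
move=> x_ge0 y_ge0.
have lagrange : \sum_i \sum_j (x i * y j - x j * y i) ^+ 2 =
    2%:R * ((\sum_i x i ^+ 2) * (\sum_i y i ^+ 2) - (\sum_i x i * y i) ^+ 2).
  transitivity (\sum_i \sum_j (x i ^+ 2 * y j ^+ 2 + x j ^+ 2 * y i ^+ 2) -
                2%:R * \sum_i \sum_j x i * y i * (x j * y j)).
    rewrite mulr_sumr -sumrB; apply: eq_bigr => i _.
    by rewrite mulr_sumr -sumrB; apply: eq_bigr => j _; ring.
  rewrite expr2 !sum_mul_sum; under eq_bigr do rewrite big_split; rewrite big_split /=.
  by rewrite [X in _ + X - _]exchange_big /=; ring.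
have : 0 <= \sum_i \sum_j (x i * y j - x j * y i) ^+ 2.
  apply: sumr_ge0 => i _; apply: sumr_ge0 => j _.
  have real_ij : x i * y j - x j * y i \is Num.real by rewrite rpredB ?rpredM ?ger0_real.
  by rewrite -(real_normK real_ij) exprn_ge0.
by rewrite lagrange pmulr_rge0 ?ltr0n // subr_ge0.
Qed.

Lemma cauchy_schwarz (u v : I -> R) :
  `|\sum_i u i * v i| ^+ 2 <= (\sum_i `|u i| ^+ 2) * (\sum_i `|v i| ^+ 2).
Proof.
apply: (le_trans _ (@cauchy_schwarz_ge0 (fun i => `|u i|) (fun i => `|v i|) _ _)) => //.
have sum_ge0 : 0 <= \sum_i `|u i| * `|v i| by apply: sumr_ge0 => i _; rewrite mulr_ge0.
rewrite lerXn2r ?nnegrE //.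
rewrite [X in _ <= X](eq_bigr (fun i => `|u i * v i|)) => [|i _]; last by rewrite normrM.
exact: ler_norm_sum.
Qed.

End CauchySchwarz.

Section Convolution.
Variables (R : numDomainType) (V : finZmodType).

Lemma sum_sub_shift (f : V -> R) s : \sum_t f (s - t) = \sum_t f t.
Proof. by rewrite [RHS](reindex_inj (inv_inj (subKr s))). Qed.

Lemma sum_sqr_conv (f : V -> R) :
  \sum_s \sum_t (f t * f (s - t)) ^+ 2 = (\sum_t f t ^+ 2) ^+ 2.
Proof.
rewrite exchange_big expr2 mulr_suml; apply: eq_bigr => t _.
rewrite mulr_sumr (reindex_inj (addIr t)) /=; apply: eq_bigr => s _.
by rewrite addrK exprMn.
Qed.

Lemma sum_sqr_conv_le (f : V -> R) : (forall t, 0 <= f t) ->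
  \sum_s (\sum_t f t * f (s - t)) ^+ 2 <= #|V|%:R * (\sum_t f t ^+ 2) ^+ 2.
Proof.
move=> f_ge0.
have conv_le s : (\sum_t f t * f (s - t)) ^+ 2 <= (\sum_t f t ^+ 2) ^+ 2.
  rewrite [X in _ <= X]expr2 -{2}(sum_sub_shift (fun t => f t ^+ 2) s).
  exact: cauchy_schwarz_ge0.
by apply: le_trans (ler_sum _ (fun s _ => conv_le s)) _; rewrite sumr_const mulr_natl.
Qed.

End Convolution.

Lemma sum_mul_eq_natr (R : pzSemiRingType) (I : finType) (f : I -> R) j :
  \sum_i f i * (i == j)%:R = f j.
Proof. by rewrite (bigD1 j) //= eqxx mulr1 big1 ?addr0 // => i /negPf->; rewrite mulr0. Qed.

Section AdditiveCharacter.
Variables (p : nat) (z : algC).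
Hypotheses (p_pr : prime p) (z_prim : p.-primitive_root z).
Local Notation F := 'F_p.
Local Notation P := (p%:R : algC).

Definition ep (x : F) : algC := z ^+ x.

Lemma epD x y : ep (x + y) = ep x * ep y.
Proof.
have -> : x + y = ((x : nat) + y)%:R :> F by rewrite natrD !natr_Zp.
by rewrite /ep val_Fp_nat // (prim_expr_mod z_prim) exprD.
Qed.

Lemma ep0 : ep 0 = 1.
Proof. by rewrite /ep expr0. Qed.

Lemma norm_ep x : `|ep x| = 1.
Proof.
have norm_z : `|z| = 1.
  apply/eqP; rewrite -(pexpr_eq1 (prime_gt0 p_pr)) ?normr_ge0 //.
  by rewrite -normrX prim_expr_order // normr1.
by rewrite /ep normrX norm_z expr1n.
Qed.

Lemma conj_ep x : (ep x)^* = ep (- x).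
Proof.
have ep_neq0 : ep x != 0 by rewrite -normr_eq0 norm_ep oner_eq0.
by apply: (mulfI ep_neq0); rewrite -normCK norm_ep expr1n -epD subrr ep0.
Qed.

Lemma ep1_neq1 : ep 1 != 1.
Proof.
have p_gt1 := prime_gt1 p_pr.
rewrite /ep -[1 : F]/(1%:R) val_Fp_nat // modn_small //.
by rewrite -[X in _ != X](expr0 z) (eq_prim_root_expr z_prim) mod0n modn_small.
Qed.

Lemma sum_ep k : \sum_x ep (k * x) = P * (k == 0)%:R.
Proof.
have [->|k_neq0] := eqVneq k 0.
  rewrite mulr1 (eq_bigr (fun=> 1)) => [|x _]; last by rewrite mul0r ep0.
  by rewrite sumr_const card_Fp.
have -> : \sum_x ep (k * x) = \sum_x ep x by rewrite [RHS](reindex_inj (mulfI k_neq0)).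
have shift1 : \sum_x ep x * ep 1 = \sum_x ep x.
  by rewrite [RHS](reindex_inj (addIr 1)); apply: eq_bigr => x _; rewrite epD.
have : (\sum_x ep x) * (ep 1 - 1) = 0 by rewrite mulrBr mulr1 mulr_suml shift1 subrr.
by move/eqP; rewrite mulr0 mulf_eq0 subr_eq0 (negPf ep1_neq1) orbF => /eqP.
Qed.

Definition fourier (f : F -> algC) (r : F) : algC := \sum_x f x * ep (- (r * x)).

Lemma fourier_inversion (f : F -> algC) w : \sum_t fourier f t * ep (t * w) = P * f w.
Proof.
transitivity (\sum_x f x * \sum_t ep ((w - x) * t)).
  under eq_bigr do rewrite mulr_suml.
  rewrite exchange_big; apply: eq_bigr => x _; rewrite mulr_sumr.
  by apply: eq_bigr => t _; rewrite -mulrA -epD; congr (_ * ep _); ring.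
under eq_bigr do rewrite sum_ep subr_eq0 eq_sym mulrCA.
by rewrite -mulr_sumr sum_mul_eq_natr.
Qed.

Lemma conj_fourier (f : F -> algC) s :
  (fourier f s)^* = \sum_u (f u)^* * ep (s * u).
Proof. by rewrite rmorph_sum; apply: eq_bigr => u _; rewrite rmorphM /= conj_ep opprK. Qed.

Lemma parseval (f : F -> algC) : \sum_s `|fourier f s| ^+ 2 = P * \sum_u `|f u| ^+ 2.
Proof.
under eq_bigr do rewrite normCK conj_fourier mulr_sumr.
rewrite exchange_big mulr_sumr; apply: eq_bigr => u _ /=.
under eq_bigr do rewrite mulrCA.
by rewrite -mulr_sumr fourier_inversion normCK; ring.
Qed.

Hypothesis p_gt2 : (2 < p)%N.

Lemma Fp2_neq0 : 2 != 0 :> F.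
Proof. by apply/eqP => /(congr1 (@nat_of_ord _)); rewrite val_Fp_nat // modn_small. Qed.

Lemma norm_quad_sum D E : D != 0 -> `|\sum_h ep (D * h ^+ 2 + E * h)| ^+ 2 = P.
Proof.
move=> D_neq0; rewrite normCK rmorph_sum mulr_sumr.
transitivity (\sum_k \sum_d ep (D * d ^+ 2 + E * d) * ep (2 * D * d * k)).
  apply: eq_bigr => k _; rewrite mulr_suml [LHS](reindex_inj (addIr k)) /=.
  by apply: eq_bigr => d _; rewrite /= conj_ep -!epD; congr ep; ring.
have sum_k d : \sum_k ep (2 * D * d * k) = P * (d == 0)%:R.
  by rewrite sum_ep !mulf_eq0 (negPf Fp2_neq0) (negPf D_neq0).
rewrite exchange_big /=; under eq_bigr do rewrite -mulr_sumr sum_k mulrCA.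
rewrite -mulr_sumr sum_mul_eq_natr.
have -> : D * 0 ^+ 2 + E * 0 = 0 :> F by ring.
by rewrite ep0 mulr1.
Qed.

Lemma quad_sum_le D E : (D != 0) || (E != 0) ->
  `|\sum_h ep (D * h ^+ 2 + E * h)| <= sqrtC P.
Proof.
have [D_eq0 /= E_neq0|D_neq0 _] := eqVneq D 0.
  rewrite (eq_bigr (fun h => ep (E * h))) => [|h _]; last by rewrite D_eq0 mul0r add0r.
  by rewrite sum_ep (negPf E_neq0) mulr0 normr0 sqrtC_ge0 ler0n.
by rewrite -(norm_quad_sum E D_neq0) sqrCK ?normr_ge0.
Qed.

Definition gauss (s : F) : algC := \sum_y ep (s * y ^+ 2).

Lemma norm_gauss s : s != 0 -> `|gauss s| ^+ 2 = P.
Proof.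
move=> s_neq0; rewrite -(norm_quad_sum 0 s_neq0) /gauss.
by under [in RHS]eq_bigr do rewrite mul0r addr0.
Qed.

Lemma quad_sum_gauss s b c : s != 0 ->
  \sum_y ep (s * y ^+ 2 + b * y + c) = ep (c - s * (b / (2 * s)) ^+ 2) * gauss s.
Proof.
move=> s_neq0; rewrite /gauss mulr_sumr [LHS](reindex_inj (addIr (- (b / (2 * s))))) /=.
apply: eq_bigr => y _; rewrite -epD; congr ep; field.
by rewrite Fp2_neq0 s_neq0.
Qed.

(* After expanding the square, every off-diagonal sum over [h] is a
   nondegenerate quadratic exponential sum, of modulus at most [sqrtC p]. *)
Lemma quad_large_sieve (c : F -> algC) (phi : F -> F -> F) :
    (forall t t', t != t' -> exists D E,
       ((D != 0) || (E != 0)) /\ forall h, phi t h - phi t' h = D * h ^+ 2 + E * h) ->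
  \sum_h `|\sum_t c t * ep (phi t h)| ^+ 2 <=
    sqrtC P * (\sum_t `|c t|) ^+ 2 + P * \sum_t `|c t| ^+ 2.
Proof.
move=> phi_quad.
have expand : \sum_h `|\sum_t c t * ep (phi t h)| ^+ 2 =
    \sum_t \sum_t' c t * (c t')^* * \sum_h ep (phi t h - phi t' h).
  transitivity (\sum_h \sum_t \sum_t' c t * (c t')^* * ep (phi t h - phi t' h)).
    apply: eq_bigr => h _; rewrite normCK rmorph_sum mulr_suml; apply: eq_bigr => t _.
    rewrite mulr_sumr; apply: eq_bigr => t' _.
    by rewrite rmorphM /= conj_ep epD; ring.
  rewrite exchange_big; apply: eq_bigr => t _ /=.
  by rewrite exchange_big; apply: eq_bigr => t' _ /=; rewrite mulr_sumr.
have bound t t' : `|\sum_h ep (phi t h - phi t' h)| <= sqrtC P + (t' == t)%:R * P.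
  have [->|t'_neq_t] := eqVneq t' t.
    rewrite (eq_bigr (fun=> 1)) => [|h _]; last by rewrite subrr ep0.
    by rewrite sumr_const card_Fp // mul1r ger0_norm ?ler0n // lerDr sqrtC_ge0 ler0n.
  have [|D [E [DE_neq0 phi_diff]]] := phi_quad t t'; first by rewrite eq_sym.
  rewrite mul0r addr0 (eq_bigr _ (fun h _ => congr1 ep (phi_diff h))).
  exact: quad_sum_le.
have pick t : P * `|c t| ^+ 2 = \sum_t' `|c t| * `|c t'| * ((t' == t)%:R * P).
  transitivity (\sum_t' `|c t| * `|c t'| * P * (t' == t)%:R).
    by rewrite sum_mul_eq_natr; ring.
  by apply: eq_bigr => t' _; ring.
have split_rhs : sqrtC P * (\sum_t `|c t|) ^+ 2 + P * \sum_t `|c t| ^+ 2 =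
    \sum_t \sum_t' `|c t| * `|c t'| * (sqrtC P + (t' == t)%:R * P).
  rewrite expr2 sum_mul_sum !mulr_sumr -big_split; apply: eq_bigr => t _ /=.
  by rewrite pick mulr_sumr -big_split; apply: eq_bigr => t' _ /=; ring.
have lhs_ge0 : 0 <= \sum_h `|\sum_t c t * ep (phi t h)| ^+ 2.
  by apply: sumr_ge0 => h _; rewrite exprn_ge0.
rewrite split_rhs -(ger0_norm lhs_ge0) expand.
apply: le_trans (ler_norm_sum _ _ _) _; apply: ler_sum => t _.
apply: le_trans (ler_norm_sum _ _ _) _; apply: ler_sum => t' _.
rewrite !normrM norm_conjC; apply: ler_wpM2l; [by rewrite mulr_ge0 | exact: bound].
Qed.

End AdditiveCharacter.

Section TripletCount.
Variables (p : nat) (z : algC) (A : {set 'F_p}).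
Hypotheses (p_pr : prime p) (p_gt2 : (2 < p)%N) (z_prim : p.-primitive_root z).
Local Notation F := 'F_p.
Local Notation P := (p%:R : algC).
Local Notation ep := (ep z).
Local Notation fourier := (fourier z).

Definition ind (x : F) : algC := (x \in A)%:R.
Definition bal (x : F) : algC := ind x - #|A|%:R / P.
Definition bal_energy : algC := \sum_x `|bal x| ^+ 2.
Definition count3 : algC := \sum_x \sum_y ind x * ind (x + y) * ind (x + y ^+ 2).
Definition bal_sum (x : F) : algC := \sum_y ind (x + y) * bal (x + y ^+ 2).
(* The correlation obtained by expanding [|bal_sum x| ^+ 2] and substituting
   [u = x + y], [h = y' - y]. *)
Definition corr (h u : F) : algC :=
  \sum_y bal (u - y + y ^+ 2) * bal (u - y + (y + h) ^+ 2).

Lemma P_neq0 : P != 0.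
Proof. by rewrite pnatr_eq0 -lt0n prime_gt0. Qed.

Lemma ind_ge0 x : 0 <= ind x.
Proof. exact: ler0n. Qed.

Lemma sqr_ind x : ind x ^+ 2 = ind x.
Proof. by rewrite /ind; case: (x \in A); rewrite ?expr1n ?expr0n. Qed.

Lemma conj_ind x : (ind x)^* = ind x.
Proof. exact: conjC_nat. Qed.

Lemma conj_bal x : (bal x)^* = bal x.
Proof. by rewrite /bal rmorphB rmorphM fmorphV /= !conjC_nat. Qed.

Lemma sum_ind : \sum_x ind x = #|A|%:R.
Proof.
rewrite -sum1_card natr_sum [RHS]big_mkcond.
by apply: eq_bigr => x _; rewrite /ind; case: (x \in A).
Qed.

Lemma sum_ind_shift x : \sum_y ind (x + y) = #|A|%:R.
Proof. by rewrite -sum_ind [RHS](reindex_inj (addrI x)). Qed.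

Lemma sum_bal : \sum_x bal x = 0.
Proof.
by rewrite sumrB sum_ind sumr_const card_Fp // -(mulr_natr (_ / P)) mulfVK ?P_neq0 ?subrr.
Qed.

Lemma bal_energy_le : bal_energy <= #|A|%:R.
Proof.
have -> : bal_energy = #|A|%:R - #|A|%:R ^+ 2 / P.
  rewrite /bal_energy (eq_bigr (fun x =>
    ind x - 2%:R * (#|A|%:R / P) * ind x + (#|A|%:R / P) ^+ 2)).
    rewrite !big_split /= sumrN -mulr_sumr sum_ind sumr_const card_Fp //.
    by field; rewrite P_neq0.
  by move=> x _; rewrite normCK conj_bal -expr2 sqrrB sqr_ind; ring.
by rewrite lerBlDr lerDl divr_ge0 ?exprn_ge0 ?ler0n.
Qed.

(* The diagonal [y = 0], excluded from [num_triplets], contributes [#|A|]. *)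
Lemma count3E : count3 = (num_triplets A + #|A|)%:R.
Proof.
have card_triplets : (num_triplets A)%:R = \sum_x \sum_y
    [&& y != 0, x \in A, x + y \in A & x + y ^+ 2 \in A]%:R :> algC.
  rewrite /num_triplets -sum1_card natr_sum big_mkcond [RHS]pair_bigA /=.
  by apply: eq_bigr => -[x y] _; rewrite /triplet_pairs inE /=; case: ifP.
rewrite natrD card_triplets -sum_ind -big_split /=; apply: eq_bigr => x _.
rewrite (bigD1 0) //= [in RHS](bigD1 0) //= add0r addrC exprS mul0r !addr0.
congr (_ + _); last by rewrite /ind; case: (x \in A); rewrite ?mulr1 ?mulr0.
apply: eq_bigr => y y_neq0; rewrite y_neq0 /ind.
by case: (x \in A); case: (x + y \in A); case: (x + y ^+ 2 \in A); rewrite ?mulr1 ?mulr0.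
Qed.

Lemma count3_sub_mean : count3 - #|A|%:R ^+ 3 / P = \sum_x ind x * bal_sum x.
Proof.
have -> : \sum_x ind x * bal_sum x =
    count3 - #|A|%:R / P * \sum_x ind x * \sum_y ind (x + y).
  rewrite /count3 mulr_sumr -sumrB; apply: eq_bigr => x _.
  rewrite /bal_sum !mulr_sumr -sumrB; apply: eq_bigr => y _; rewrite /bal; ring.
under [in RHS]eq_bigr do rewrite sum_ind_shift.
by rewrite -mulr_suml sum_ind; ring.
Qed.

Lemma norm_count3_sub_mean_le :
  `|count3 - #|A|%:R ^+ 3 / P| ^+ 2 <= #|A|%:R * \sum_x `|bal_sum x| ^+ 2.
Proof.
rewrite count3_sub_mean; apply: le_trans (cauchy_schwarz _ _) _.
apply: ler_wpM2r; first by apply: sumr_ge0 => x _; exact: exprn_ge0.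
by rewrite (eq_bigr ind) ?sum_ind // => x _; rewrite ger0_norm ?sqr_ind ?ind_ge0.
Qed.

Lemma sum_norm_bal_sum :
  \sum_x `|bal_sum x| ^+ 2 = \sum_u \sum_h ind u * ind (u + h) * corr h u.
Proof.
transitivity (\sum_x \sum_y \sum_h ind (x + y) * ind (x + (y + h)) *
                (bal (x + y ^+ 2) * bal (x + (y + h) ^+ 2))).
  apply: eq_bigr => x _; rewrite normCK /bal_sum rmorph_sum mulr_suml.
  apply: eq_bigr => y _; rewrite mulr_sumr [LHS](reindex_inj (addrI y)) /=.
  by apply: eq_bigr => h _; rewrite rmorphM /= conj_ind conj_bal; ring.
rewrite exchange_big /=.
transitivity (\sum_y \sum_u \sum_h ind u * ind (u + h) *
                (bal (u - y + y ^+ 2) * bal (u - y + (y + h) ^+ 2))).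
  apply: eq_bigr => y _; rewrite [RHS](reindex_inj (addIr y)) /=.
  by apply: eq_bigr => x _; apply: eq_bigr => h _; rewrite addrK addrA.
rewrite exchange_big; apply: eq_bigr => u _ /=.
by rewrite exchange_big; apply: eq_bigr => h _ /=; rewrite /corr mulr_sumr.
Qed.

Lemma sum_norm_bal_sum_sqr_le :
  (\sum_x `|bal_sum x| ^+ 2) ^+ 2 <= #|A|%:R ^+ 2 * \sum_h \sum_u `|corr h u| ^+ 2.
Proof.
have W_ge0 : 0 <= \sum_x `|bal_sum x| ^+ 2 by apply: sumr_ge0 => x _; exact: exprn_ge0.
rewrite -(ger0_norm W_ge0) sum_norm_bal_sum pair_bigA /=.
apply: le_trans (cauchy_schwarz _ _) _.
rewrite -(pair_bigA _ (fun u h => `|ind u * ind (u + h)| ^+ 2)) /=.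
rewrite -(pair_bigA _ (fun u h => `|corr h u| ^+ 2)) /= [X in _ * X <= _]exchange_big /=.
apply: ler_wpM2r; first by do 2!(apply: sumr_ge0 => ? _); exact: exprn_ge0.
rewrite expr2 -{1}sum_ind mulr_suml; apply: ler_sum => u _.
rewrite -(sum_ind_shift u) mulr_sumr; apply: ler_sum => h _.
by rewrite normrM exprMn !ger0_norm ?ind_ge0 // !sqr_ind.
Qed.

Lemma fourier_corr_shift h s : fourier (corr h) s =
  \sum_y \sum_v bal v * bal (v + (2 * y * h + h ^+ 2)) * ep (- (s * (v + (y - y ^+ 2)))).
Proof.
rewrite /fourier /corr; under eq_bigr do rewrite mulr_suml.
rewrite exchange_big; apply: eq_bigr => y _ /=.
rewrite [LHS](reindex_inj (addIr (y - y ^+ 2))); apply: eq_bigr => v _ /=.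
by congr (bal _ * bal _ * _); ring.
Qed.

Lemma fourier_corr0 h : fourier (corr h) 0 = (h == 0)%:R * (P * bal_energy).
Proof.
rewrite fourier_corr_shift.
under eq_bigr do under eq_bigr do rewrite mul0r oppr0 ep0 mulr1.
have [->|h_neq0] := eqVneq h 0.
  rewrite mul1r /bal_energy [in RHS](eq_bigr (fun v => bal v * bal v)) => [|v _].
    have shift0 y : 2 * y * 0 + 0 ^+ 2 = 0 :> F by ring.
    under eq_bigr do under eq_bigr do rewrite shift0 addr0.
    by rewrite sumr_const card_Fp // mulr_natl.
  by rewrite normCK conj_bal.
have f_inj : injective (fun y : F => 2 * y * h + h ^+ 2).
  by move=> y1 y2 /addIr /(mulIf h_neq0) /(mulfI (Fp2_neq0 p_pr p_gt2)).
have sum_bal_shift v : \sum_w bal (v + w) = 0.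
  by rewrite -[RHS]sum_bal [RHS](reindex_inj (addrI v)).
transitivity (\sum_w \sum_v bal v * bal (v + w)).
  by rewrite [RHS](reindex_inj f_inj).
by rewrite mul0r exchange_big big1 // => v _; rewrite -mulr_sumr sum_bal_shift mulr0.
Qed.

Lemma fourier_corr h s :
  fourier (corr h) s = P^-1 * \sum_t fourier bal t * fourier bal (s - t) *
    \sum_y ep (s * y ^+ 2 + (2 * t * h - s) * y + t * h ^+ 2).
Proof.
have bal_inv w : bal w = P^-1 * \sum_t fourier bal t * ep (t * w).
  by rewrite fourier_inversion // mulKf // P_neq0.
rewrite fourier_corr_shift.
transitivity (P^-1 * \sum_y \sum_v \sum_t fourier bal t * (bal v * ep (- ((s - t) * v))) *
   ep (s * y ^+ 2 + (2 * t * h - s) * y + t * h ^+ 2)).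
  rewrite mulr_sumr; apply: eq_bigr => y _; rewrite mulr_sumr; apply: eq_bigr => v _.
  rewrite (bal_inv (v + _)) mulr_sumr mulr_sumr mulr_suml mulr_sumr; apply: eq_bigr => t _.
  have phase : ep (t * (v + (2 * y * h + h ^+ 2))) * ep (- (s * (v + (y - y ^+ 2)))) =
      ep (- ((s - t) * v)) * ep (s * y ^+ 2 + (2 * t * h - s) * y + t * h ^+ 2).
    by rewrite -!epD //; congr (ep _); ring.
  transitivity (P^-1 * fourier bal t * bal v *
     (ep (t * (v + (2 * y * h + h ^+ 2))) * ep (- (s * (v + (y - y ^+ 2)))))); first by ring.
  by rewrite phase; ring.
by rewrite (sum3_factor (fourier bal) (fun v t => bal v * ep (- ((s - t) * v)))).
Qed.

(* Completing the square in [y] turns the inner sum of [fourier_corr] into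
   [gauss s] times the phase [ep (phi t h)], quadratic in [h]. *)
Lemma sum_norm_fourier_corr_le s : s != 0 ->
  \sum_h `|fourier (corr h) s| ^+ 2 <=
    P^-1 * (sqrtC P * (\sum_t `|fourier bal t| * `|fourier bal (s - t)|) ^+ 2 +
            P * \sum_t (`|fourier bal t| * `|fourier bal (s - t)|) ^+ 2).
Proof.
move=> s_neq0.
pose phi t h := t * h ^+ 2 - s * ((2 * t * h - s) / (2 * s)) ^+ 2.
pose c t := fourier bal t * fourier bal (s - t).
have corr_phase h : `|fourier (corr h) s| ^+ 2 = P^-1 * `|\sum_t c t * ep (phi t h)| ^+ 2.
  rewrite fourier_corr (eq_bigr (fun t => gauss z s * (c t * ep (phi t h)))) => [|t _].
    rewrite -mulr_sumr !normrM !exprMn norm_gauss // normfV (ger0_norm (ler0n _ p)).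
    by field; rewrite P_neq0.
  by rewrite quad_sum_gauss // /c /phi; ring.
have phi_quad t t' : t != t' -> exists D E,
    ((D != 0) || (E != 0)) /\ forall h, phi t h - phi t' h = D * h ^+ 2 + E * h.
  move=> t_neq_t'; exists ((t - t') * (s - t - t') / s), (t - t').
  split=> [|h]; first by rewrite subr_eq0 t_neq_t' orbT.
  by rewrite /phi; field; rewrite s_neq0 (Fp2_neq0 p_pr p_gt2).
rewrite (eq_bigr _ (fun h _ => corr_phase h)) -mulr_sumr.
apply: ler_wpM2l; first by rewrite invr_ge0 ler0n.
rewrite [X in _ <= _ * X ^+ 2 + _](eq_bigr (fun t => `|c t|)) => [|t _]; last first.
  by rewrite normrM.
rewrite [X in _ <= _ + _ * X](eq_bigr (fun t => `|c t| ^+ 2)) => [|t _]; last first.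
  by rewrite normrM.
exact: quad_large_sieve.
Qed.

Lemma corr_energy_le :
  \sum_h \sum_u `|corr h u| ^+ 2 <= (2%:R + sqrtC P) * P * bal_energy ^+ 2.
Proof.
pose g t := `|fourier bal t|.
pose B s := P^-1 * (sqrtC P * (\sum_t g t * g (s - t)) ^+ 2 +
                    P * \sum_t (g t * g (s - t)) ^+ 2).
pose Q s := \sum_h `|fourier (corr h) s| ^+ 2.
have sqrtP_ge0 : 0 <= sqrtC P by rewrite sqrtC_ge0.
have g_ge0 t : 0 <= g t := normr_ge0 _.
have energy_ge0 : 0 <= bal_energy by apply: sumr_ge0 => x _; exact: exprn_ge0.
have g_energy : \sum_t g t ^+ 2 = P * bal_energy by exact: parseval.
have corr_parseval : \sum_h \sum_u `|corr h u| ^+ 2 = P^-1 * \sum_s Q s.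
  rewrite /Q [in RHS]exchange_big mulr_sumr; apply: eq_bigr => h _.
  by rewrite parseval // mulKf ?P_neq0.
have Q0 : Q 0 = (P * bal_energy) ^+ 2.
  rewrite /Q (bigD1 0) //= fourier_corr0 eqxx mul1r ger0_norm ?mulr_ge0 //.
  rewrite big1 ?addr0 // => h /negPf h_neq0.
  by rewrite fourier_corr0 h_neq0 mul0r normr0 expr0n.
have B_ge0 s : 0 <= B s.
  by rewrite mulr_ge0 ?invr_ge0 ?addr_ge0 ?mulr_ge0 ?exprn_ge0 ?sumr_ge0 // => t _;
    rewrite ?exprn_ge0 ?mulr_ge0.
have sumQ_le : \sum_s Q s <= (P * bal_energy) ^+ 2 + \sum_s B s.
  rewrite (bigD1 0) //= Q0 lerD2l [X in _ <= X](bigD1 0) //= -[X in X <= _]add0r.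
  by apply: lerD => //; apply: ler_sum => s; exact: sum_norm_fourier_corr_le.
have sumB_le : \sum_s B s <=
    P^-1 * (sqrtC P * (P * (P * bal_energy) ^+ 2) + P * (P * bal_energy) ^+ 2).
  rewrite -mulr_sumr big_split /= -!mulr_sumr (sum_sqr_conv g) g_energy.
  apply: ler_wpM2l; first by rewrite invr_ge0.
  rewrite lerD2r; apply: ler_wpM2l => //.
  by have := sum_sqr_conv_le g_ge0; rewrite card_Fp // g_energy.
have sumQ_le' := le_trans sumQ_le (lerD (lexx _) sumB_le).
rewrite corr_parseval; apply: le_trans (ler_wpM2l _ sumQ_le') _; first by rewrite invr_ge0.
by apply: le_of_eq; field; rewrite P_neq0.
Qed.

Lemma count3_discrepancy :
  `|count3 - #|A|%:R ^+ 3 / P| ^+ 8 <= 9%:R * P ^+ 3 * #|A|%:R ^+ 12.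
Proof.
set L := `|_|.
pose W := \sum_x `|bal_sum x| ^+ 2; pose S := \sum_h \sum_u `|corr h u| ^+ 2.
have a_ge0 : 0 <= #|A|%:R :> algC := ler0n _ _.
have W_ge0 : 0 <= W by apply: sumr_ge0 => x _; exact: exprn_ge0.
have S_ge0 : 0 <= S by do 2!(apply: sumr_ge0 => ? _); exact: exprn_ge0.
have energy_ge0 : 0 <= bal_energy by apply: sumr_ge0 => x _; exact: exprn_ge0.
have sqrtP_ge1 : 1 <= sqrtC P.
  by rewrite -{1}sqrtC1 ler_sqrtC ?nnegrE ?ler01 // (ler_nat _ 1 p) prime_gt0.
have S_le : S <= 3%:R * sqrtC P * P * #|A|%:R ^+ 2.
  apply: le_trans corr_energy_le _.
  apply: ler_pM; rewrite ?exprn_ge0 ?mulr_ge0 ?addr_ge0 ?sqrtC_ge0 ?ler0n //.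
    apply: ler_pM; rewrite ?addr_ge0 ?sqrtC_ge0 ?ler0n //.
    by rewrite (natrD _ 2 1) mulrDl mul1r lerD2r ler_peMr ?ler0n.
  exact: ler_wXn2r (bal_energy_le).
rewrite (exprM L 2 4).
apply: le_trans (ler_wXn2r 4 (exprn_ge0 _ (normr_ge0 _)) norm_count3_sub_mean_le) _.
rewrite exprMn (exprM W 2 2) -/W.
apply: le_trans (ler_wpM2l (exprn_ge0 _ a_ge0)
                 (ler_wXn2r 2 (exprn_ge0 _ W_ge0) sum_norm_bal_sum_sqr_le)) _.
apply: le_trans (ler_wpM2l (exprn_ge0 _ a_ge0)
                 (ler_wXn2r 2 (mulr_ge0 (exprn_ge0 _ a_ge0) S_ge0)
                   (ler_wpM2l (exprn_ge0 _ a_ge0) S_le))) _.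
by apply: le_of_eq; rewrite !exprMn sqrtCK; ring.
Qed.

Lemma count3_discrepancy_nat :
  ((#|A| ^ 3 - p * (num_triplets A + #|A|)) ^ 8 <= 9 * p ^ 11 * #|A| ^ 12)%N.
Proof.
set T := num_triplets A; set a := #|A|.
rewrite -(ler_nat algC) natrX.
have [|a3_gt] := leqP (a ^ 3)%N (p * (T + a)).
  by rewrite -subn_eq0 => /eqP->; rewrite expr0n ler0n.
have discr_eq :
    ((a ^ 3 - p * (T + a))%N%:R : algC) = - (P * (count3 - a%:R ^+ 3 / P)).
  by rewrite count3E (natrB _ (ltnW a3_gt)) natrX natrM; field; rewrite P_neq0.
rewrite -[X in X ^+ 8](ger0_norm (ler0n _ _)) discr_eq normrN normrM exprMn.
rewrite (ger0_norm (ler0n _ p)).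
apply: le_trans (ler_wpM2l (exprn_ge0 _ (ler0n _ p)) count3_discrepancy) _.
by apply: le_of_eq; rewrite (natrM _ (9 * p ^ 11)) (natrM _ 9) !natrX; ring.
Qed.

End TripletCount.

Theorem corollary1p2 :
  exists c1 c2 : R, (0 < c1)%R /\ (0 < c2)%R /\
  forall (p : nat) (A : {set 'F_p}),
    prime p ->
    let delta := (INR #|A| / INR p)%R in
    (delta > c1 * Rpower (INR p) (- (1 / 15)))%R ->
    (exists x y : 'F_p, [/\ y != 0%mcR, x \in A, (x + y)%mcR \in A & (x + y ^+ 2)%mcR \in A])
    /\ (INR (num_triplets A) >= c2 * delta ^ 3 * (INR p) ^ 2)%R.
Proof.
exists 4%R, (1 / 2)%R; split; first lra; split; first lra.
move=> p A p_pr delta dense.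
have p_gt0 := prime_gt0 p_pr.
have a_le_p : (#|A| <= p)%N by have := max_card A; rewrite card_Fp.
have a15 : (4 ^ 15 * p ^ 14 <= #|A| ^ 15)%N.
  by apply: Rpower_density_expn_le => //; rewrite [INR 4]/=; rewrite /delta in dense; lra.
have p_gt2 : (2 < p)%N.
  have := @density_expn_weaken (4 ^ 15) _ _ 0 14 p_gt0 a_le_p a15.
  by move: a_le_p; clear; lia.
have [z z_prim] := C_prim_root_exists p_gt0.
have cube_le := cube_le_of_discrepancy p_gt0 a_le_p a15
  (count3_discrepancy_nat A p_pr p_gt2 z_prim).
split; last exact: INR_density_cube_le.
have a_gt0 : (0 < #|A|)%N.
  rewrite lt0n; apply: contraTneq a15 => ->.
  by rewrite exp0n // -ltnNge muln_gt0 !expn_gt0 p_gt0.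
have : (0 < num_triplets A)%N.
  rewrite lt0n; apply: contraTneq cube_le => ->.
  by rewrite muln0 -ltnNge expn_gt0 a_gt0.
by case/card_gt0P => -[x y]; rewrite inE => /and4P[]; exists x, y.
Qed.
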